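(* Let $\tau=x+iy$ with $y>0$, and let $u,v\in\mathbb{R}$ be not both integers. For $s\in[1,2]$ and $p>w>0$ set $$h(w,s)=\sum_{\substack{(m,n)\in\mathbb{Z}^2\\ w<|m\tau+n|^2<p}}\frac{e^{2\pi i(mu+nv)}}{|m\tau+n|^{2s}}.$$ Then $h(w,s)=O(w^{1/2-s})$ uniformly for $s\in[1,2]$, with implied constant independent of $w$, $s$ and $p$. *)

From Stdlib Require Import Reals ZArith List.
From Coquelicot Require Import Coquelicot.
Open Scope R_scope.

Definition expi (theta : R) : C := (cos theta, sin theta).

(* |m tau + n|^2 for tau = x + i y *)
Definition lnorm2 (x y : R) (m n : Z) : R :=
  (IZR m * x + IZR n)^2 + (IZR m * y)^2.

Definition zrange (N : nat) : list Z :=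
  map (fun k => (Z.of_nat k - Z.of_nat N)%Z) (seq 0 (2 * N + 1)).

Definition hterm (x y u v w p s : R) (mn : Z * Z) : C :=
  let m := fst mn in let n := snd mn in
  let q := lnorm2 x y m n in
  if Rlt_dec w q then
    if Rlt_dec q p then
      scal (/ Rpower q s) (expi (2 * PI * (IZR m * u + IZR n * v)))
    else 0%C
  else 0%C.

(* Sum of hterm over the box [-N,N]^2. When the box contains every (m,n)
   with w < |m tau + n|^2 < p, this is exactly h(w,s). *)
Definition h_box (N : nat) (x y u v w p s : R) : C :=
  fold_right Cplus 0%C
    (map (hterm x y u v w p s) (list_prod (zrange N) (zrange N))).

(* Sum h(w,s) row by row, along the coordinate whose frequency (u or v) is not an
   integer.  Along such a row the phases form a geometric progression with ratio
   z <> 1, so by Abel summation the row sum is at most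
   (|first weight| + |last weight| + total variation of the weights) / |z - 1|.
   The weights are q^(-s) cut off to w < q < p, evaluated along the convex sequence
   q = |m tau + n|^2.  In row b these values never fall in the gap
   (w, mu (1 + b^2)), where mu depends only on tau, so the total variation is at
   most 4 max(w, mu (1 + b^2))^(-s) <= 4 w^(1-s) / max(w, mu (1 + b^2)).
   Summing over b gives O(w^(1-s) / sqrt(w mu)) = O(w^(1/2-s)). *)

From Stdlib Require Import Reals ZArith List Lra Lia Classical.
From Coquelicot Require Import Coquelicot.
Open Scope R_scope.

Definition Csum {A} (l : list A) (f : A -> C) : C := fold_right Cplus 0%C (map f l).
Definition Rsum {A} (l : list A) (f : A -> R) : R := fold_right Rplus 0 (map f l).

Lemma Csum_ext {A} (l : list A) f g : (forall a, f a = g a) -> Csum l f = Csum l g.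
Proof. intros Hfg; unfold Csum; f_equal; apply map_ext, Hfg. Qed.

Lemma Csum_app {A} (l1 l2 : list A) f : Csum (l1 ++ l2) f = (Csum l1 f + Csum l2 f)%C.
Proof. unfold Csum; induction l1; simpl; [ring | rewrite IHl1; ring]. Qed.

Lemma Rsum_app {A} (l1 l2 : list A) f : Rsum (l1 ++ l2) f = Rsum l1 f + Rsum l2 f.
Proof. unfold Rsum; induction l1; simpl; [ring | rewrite IHl1; ring]. Qed.

Lemma Csum_seq_S f n : Csum (seq 0 (S n)) f = (Csum (seq 0 n) f + f n)%C.
Proof. rewrite seq_S, Csum_app; unfold Csum; simpl; ring. Qed.

Lemma Rsum_seq_S f n : Rsum (seq 0 (S n)) f = Rsum (seq 0 n) f + f n.
Proof. rewrite seq_S, Rsum_app; unfold Rsum; simpl; ring. Qed.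

Lemma Csum_plus {A} (l : list A) f g :
  Csum l (fun a => f a + g a)%C = (Csum l f + Csum l g)%C.
Proof. unfold Csum; induction l; simpl; [ring | rewrite IHl; ring]. Qed.

Lemma Csum_list_prod {A B} (l1 : list A) (l2 : list B) (f : A * B -> C) :
  Csum (list_prod l1 l2) f = Csum l1 (fun a => Csum l2 (fun b => f (a, b))).
Proof.
  induction l1 as [|a l1 IH]; [reflexivity|].
  simpl; rewrite Csum_app, IH; unfold Csum at 1; rewrite map_map; reflexivity.
Qed.

Lemma Csum_comm {A B} (l1 : list A) (l2 : list B) (F : A -> B -> C) :
  Csum l1 (fun a => Csum l2 (F a)) = Csum l2 (fun b => Csum l1 (fun a => F a b)).
Proof.
  induction l1 as [|a l1 IH].
  - unfold Csum; simpl; induction l2; simpl; [reflexivity | rewrite <- IHl2; ring].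
  - change (Csum (a :: l1) (fun a => Csum l2 (F a)))
      with (Csum l2 (F a) + Csum l1 (fun a => Csum l2 (F a)))%C.
    rewrite IH, <- Csum_plus; reflexivity.
Qed.

Lemma Cmod_Csum_le {A} (l : list A) f : Cmod (Csum l f) <= Rsum l (fun a => Cmod (f a)).
Proof.
  unfold Csum, Rsum; induction l; simpl; [rewrite Cmod_0; lra|].
  eapply Rle_trans; [apply Cmod_triangle | lra].
Qed.

Lemma Rsum_le {A} (l : list A) f g : (forall a, f a <= g a) -> Rsum l f <= Rsum l g.
Proof. intros Hfg; unfold Rsum; induction l; simpl; [lra | pose proof (Hfg a); lra]. Qed.

Lemma Rsum_scal_l {A} (l : list A) f c : Rsum l (fun a => c * f a) = c * Rsum l f.
Proof. unfold Rsum; induction l; simpl; [ring | rewrite IHl; ring]. Qed.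

Lemma Csum_zrange (g : Z -> C) N :
  Csum (zrange N) g = Csum (seq 0 (S (2 * N))) (fun j => g (Z.of_nat j - Z.of_nat N)%Z).
Proof. unfold zrange, Csum; rewrite map_map, Nat.add_1_r; reflexivity. Qed.

Lemma zrange_S N :
  zrange (S N) = (- Z.of_nat (S N))%Z :: zrange N ++ Z.of_nat (S N) :: nil.
Proof.
  unfold zrange.
  replace (2 * S N + 1)%nat with (S (S (2 * N + 1))) by lia.
  rewrite seq_S, <- cons_seq, <- seq_shift, map_app; cbn [map app]; rewrite map_map.
  f_equal; f_equal; [apply map_ext; intro; lia | f_equal; lia].
Qed.

Lemma expi_add a b : expi (a + b) = (expi a * expi b)%C.
Proof.
  unfold expi; rewrite cos_plus, sin_plus; apply injective_projections; simpl; ring.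
Qed.

Lemma Cmod_expi t : Cmod (expi t) = 1.
Proof.
  unfold Cmod, expi; simpl; rewrite <- sqrt_1 at 3; f_equal.
  pose proof (sin2_cos2 t); unfold Rsqr in *; lra.
Qed.

Lemma expi_2PI_neq_1 a : ~ (exists k : Z, a = IZR k) -> expi (2 * PI * a) <> 1%C.
Proof.
  intros Ha E; apply Ha; unfold expi in E; injection E as Ecos _.
  replace (2 * PI * a) with (2 * (PI * a)) in Ecos by ring.
  rewrite cos_2a_sin in Ecos.
  destruct (sin_eq_0_0 (PI * a)) as [k Hk]; [nra|].
  exists k; pose proof PI_RGT_0; apply Rmult_eq_reg_l with PI; lra.
Qed.

Lemma Cmod_sub_1_pos (z : C) : z <> 1%C -> 0 < Cmod (z - 1)%C.
Proof.
  intros Hz; apply Cmod_gt_0; intro E; apply Hz.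
  replace z with ((z - 1) + 1)%C by ring; rewrite E; ring.
Qed.

Definition variation (h : nat -> R) (n : nat) : R :=
  Rsum (seq 0 n) (fun j => Rabs (h (S j) - h j)).

Lemma abel_summation (c : nat -> C) (z : C) (h : nat -> R) n :
  (forall j, c (S j) = (c j * z)%C) ->
  ((z - 1) * Csum (seq 0 (S n)) (fun j => c j * h j)
   = c (S n) * h n - c O * h O
     - Csum (seq 0 n) (fun j => c (S j) * RtoC (h (S j) - h j)))%C.
Proof.
  intros Hc; induction n as [|n IH].
  - unfold Csum; simpl; rewrite Hc; ring.
  - rewrite Csum_seq_S, Cmult_plus_distr_l, IH, Csum_seq_S, (Hc (S n)), RtoC_minus; ring.
Qed.

Lemma abel_summation_bound (c : nat -> C) (z : C) (h : nat -> R) n :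
  (forall j, c (S j) = (c j * z)%C) -> (forall j, Cmod (c j) = 1) ->
  Cmod (z - 1)%C * Cmod (Csum (seq 0 (S n)) (fun j => c j * h j)%C)
  <= Rabs (h n) + Rabs (h O) + variation h n.
Proof.
  intros Hc Hmod; rewrite <- Cmod_mult, abel_summation by exact Hc.
  assert (Hvar : Cmod (Csum (seq 0 n) (fun j => c (S j) * RtoC (h (S j) - h j)))%C
                 <= variation h n).
  { eapply Rle_trans; [apply Cmod_Csum_le | apply Rsum_le; intro j].
    rewrite Cmod_mult, Hmod, Cmod_R; lra. }
  eapply Rle_trans; [apply Cmod_triangle|]; rewrite Cmod_opp.
  eapply Rle_trans; [apply Rplus_le_compat_r, Cmod_triangle|].
  rewrite Cmod_opp, !Cmod_mult, !Hmod, !Cmod_R; lra.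
Qed.

Section ConvexVariation.

Variables (q h phi : nat -> R) (M : R).
Hypothesis q_convex : forall j, q (S j) - q j <= q (S (S j)) - q (S j).
Hypothesis h_controlled : forall i j, q i <= q j -> Rabs (h i - h j) <= phi i - phi j.
Hypothesis phi_bounded : forall j, 0 <= phi j <= M.

Lemma increments_nondecreasing j k : (j <= k)%nat -> q (S j) - q j <= q (S k) - q k.
Proof. induction 1 as [|k _ IH]; [lra | pose proof (q_convex k); lra]. Qed.

Lemma variation_le_decreasing n :
  (forall j, (j < n)%nat -> q (S j) <= q j) -> variation h n <= phi n - phi O.
Proof.
  induction n as [|n IH]; intros Hdec; unfold variation in *; [unfold Rsum; simpl; lra|].
  rewrite Rsum_seq_S.
  assert (Rabs (h (S n) - h n) <= phi (S n) - phi n) by (apply h_controlled, Hdec; lia).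
  specialize (IH (fun j Hj => Hdec j ltac:(lia))); lra.
Qed.

Lemma variation_convex_le n : variation h n <= 2 * M.
Proof.
  enough (variation h n <= 2 * M - phi O - phi n)
    by (pose proof (phi_bounded O); pose proof (phi_bounded n); lra).
  induction n as [|n IH]; [unfold variation, Rsum; simpl; pose proof (phi_bounded O); lra|].
  destruct (Rle_dec (q n) (q (S n))) as [Hup | Hdown].
  - unfold variation in *; rewrite Rsum_seq_S.
    assert (Rabs (h (S n) - h n) <= phi n - phi (S n))
      by (rewrite Rabs_minus_sym; apply h_controlled, Hup).
    lra.
  - (* a convex sequence that decreases at step n has decreased at every earlier step *)
    assert (Hdec : forall j, (j < S n)%nat -> q (S j) <= q j).
    { intros j Hj; pose proof (increments_nondecreasing j n ltac:(lia)); lra. }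
    pose proof (variation_le_decreasing (S n) Hdec); pose proof (phi_bounded (S n)); lra.
Qed.

End ConvexVariation.

Lemma Rinv_Rpower_pos a s : 0 < / Rpower a s.
Proof. apply Rinv_0_lt_compat, exp_pos. Qed.

Lemma Rinv_Rpower_le a b s : 0 <= s -> 0 < a <= b -> / Rpower b s <= / Rpower a s.
Proof. intros; apply Rinv_le_contravar; [apply exp_pos | apply Rle_Rpower_l; lra]. Qed.

Definition trunc_pow (w p s q : R) : R :=
  if Rlt_dec w q then if Rlt_dec q p then / Rpower q s else 0 else 0.

Definition outside_gap (w m q : R) : Prop := q <= w \/ m <= q.

Definition gap_bound (w s m : R) : R := / Rpower (Rmax w m) s.

(* Dominates the variation of [trunc_pow] over the gap-avoiding values above [q]:
   one upward jump across the gap and one descent to 0, each at most [gap_bound]. *)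
Definition trunc_pow_potential (w p s m q : R) : R :=
  if Rlt_dec w q then if Rle_dec m q then trunc_pow w p s q else 2 * gap_bound w s m
  else 2 * gap_bound w s m.

Section TruncatedPower.

Variables w p s m : R.
Hypotheses (hw : 0 < w) (hs : 0 <= s).

Lemma trunc_pow_ge0 q : 0 <= trunc_pow w p s q.
Proof.
  unfold trunc_pow; destruct Rlt_dec; [destruct Rlt_dec|]; try lra.
  left; apply Rinv_Rpower_pos.
Qed.

Lemma trunc_pow_antitone a b : w < a <= b -> trunc_pow w p s b <= trunc_pow w p s a.
Proof.
  intros Hab; unfold trunc_pow.
  destruct (Rlt_dec w a); [|lra]; destruct (Rlt_dec w b); [|lra].
  destruct (Rlt_dec b p); [|destruct Rlt_dec; [left; apply Rinv_Rpower_pos | lra]].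
  destruct (Rlt_dec a p); [apply Rinv_Rpower_le | ]; lra.
Qed.

Lemma trunc_pow_le_gap_bound q : outside_gap w m q -> trunc_pow w p s q <= gap_bound w s m.
Proof.
  intros Hq; pose proof (Rinv_Rpower_pos (Rmax w m) s).
  unfold trunc_pow, gap_bound; destruct (Rlt_dec w q); [|lra].
  destruct (Rlt_dec q p); [|lra].
  apply Rinv_Rpower_le; [lra | split; [apply Rlt_le_trans with w, Rmax_l | apply Rmax_lub]].
  all: destruct Hq; lra.
Qed.

Lemma trunc_pow_potential_bounds q :
  0 <= trunc_pow_potential w p s m q <= 2 * gap_bound w s m.
Proof.
  pose proof (Rinv_Rpower_pos (Rmax w m) s); fold (gap_bound w s m) in *.
  unfold trunc_pow_potential.
  destruct (Rlt_dec w q); [destruct (Rle_dec m q) as [Hmq|]|]; try lra.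
  pose proof (trunc_pow_ge0 q); pose proof (trunc_pow_le_gap_bound q (or_intror Hmq)); lra.
Qed.

Lemma trunc_pow_potential_controls a b :
  outside_gap w m a -> outside_gap w m b -> a <= b ->
  Rabs (trunc_pow w p s a - trunc_pow w p s b)
  <= trunc_pow_potential w p s m a - trunc_pow_potential w p s m b.
Proof.
  intros Ha Hb Hab.
  assert (Hzero : forall q, ~ w < q -> trunc_pow w p s q = 0)
    by (intros q Hq; unfold trunc_pow; destruct (Rlt_dec w q); lra).
  unfold trunc_pow_potential.
  destruct (Rlt_dec w a) as [Hwa|Hwa]; [destruct (Rle_dec m a) as [Hma|Hma]|].
  - destruct (Rlt_dec w b); [|lra]; destruct (Rle_dec m b); [|lra].
    pose proof (trunc_pow_antitone a b); rewrite Rabs_right; lra.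
  - destruct Ha; lra.
  - rewrite (Hzero a Hwa).
    destruct (Rlt_dec w b) as [Hwb|Hwb]; [destruct (Rle_dec m b)|].
    + pose proof (trunc_pow_ge0 b); pose proof (trunc_pow_le_gap_bound b Hb).
      rewrite Rminus_0_l, Rabs_Ropp, Rabs_right; lra.
    + destruct Hb; lra.
    + rewrite (Hzero b Hwb), Rminus_diag, Rabs_R0; lra.
Qed.

End TruncatedPower.

Lemma row_sum_bound N (Q th : Z -> R) al w p s m :
  0 < w -> 0 <= s ->
  (forall a, th (a + 1)%Z = th a + al) ->
  (forall a, Q (a + 1)%Z - Q a <= Q (a + 2)%Z - Q (a + 1)%Z) ->
  (forall a, outside_gap w m (Q a)) ->
  Cmod (expi (2 * PI * al) - 1)%C
  * Cmod (Csum (zrange N) (fun a => expi (2 * PI * th a) * trunc_pow w p s (Q a))%C)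
  <= 6 * gap_bound w s m.
Proof.
  intros hw hs Hth HQ Hgap; rewrite Csum_zrange.
  set (shift j := (Z.of_nat j - Z.of_nat N)%Z).
  assert (Hshift : forall j, shift (S j) = (shift j + 1)%Z) by (intro; unfold shift; lia).
  set (c j := expi (2 * PI * th (shift j))).
  set (h j := trunc_pow w p s (Q (shift j))).
  change (fun j => _) with (fun j => c j * RtoC (h j))%C.
  assert (Hc : forall j, c (S j) = (c j * expi (2 * PI * al))%C)
    by (intro; unfold c; rewrite <- expi_add, Hshift, Hth; f_equal; ring).
  assert (Hvar : variation h (2 * N) <= 2 * (2 * gap_bound w s m)).
  { apply variation_convex_le with (fun j => Q (shift j))
      (fun j => trunc_pow_potential w p s m (Q (shift j))).
    - intro j; rewrite !Hshift, <- !Z.add_assoc; apply HQ.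
    - intros; apply trunc_pow_potential_controls; auto.
    - intro; apply trunc_pow_potential_bounds; auto. }
  assert (Hend : forall j, Rabs (h j) <= gap_bound w s m).
  { intro j; unfold h; rewrite Rabs_right by (apply Rle_ge, trunc_pow_ge0).
    apply trunc_pow_le_gap_bound; auto. }
  pose proof (abel_summation_bound c _ h (2 * N) Hc (fun j => Cmod_expi _)).
  pose proof (Hend (2 * N)%nat); pose proof (Hend O); lra.
Qed.

Definition lattice_const (x y : R) : R := y ^ 2 / (2 * y ^ 2 + 1 + 2 * x ^ 2).

Lemma lattice_const_pos x y : 0 < y -> 0 < lattice_const x y.
Proof. intros; unfold lattice_const; apply Rdiv_lt_0_compat; nra. Qed.

Lemma lnorm2_ge x y m n : 0 < y ->
  lattice_const x y * (IZR m ^ 2 + IZR n ^ 2) <= lnorm2 x y m n.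
Proof.
  intros hy; unfold lattice_const, lnorm2.
  set (a := IZR m); set (b := IZR n); set (D := 2 * y ^ 2 + 1 + 2 * x ^ 2).
  assert (HD : 0 < D) by (unfold D; nra).
  replace (y ^ 2 / D * (a ^ 2 + b ^ 2)) with (y ^ 2 * (a ^ 2 + b ^ 2) / D) by (field; lra).
  apply Rle_div_l; [lra|].
  assert (E : ((a * x + b) ^ 2 + (a * y) ^ 2) * D - y ^ 2 * (a ^ 2 + b ^ 2)
    = (y * (2 * a * x + b)) ^ 2 + 2 * (a * y * y) ^ 2 + (a * x + b) ^ 2
      + 2 * (x * (a * x + b)) ^ 2) by (unfold D; ring).
  pose proof (pow2_ge_0 (y * (2 * a * x + b))); pose proof (pow2_ge_0 (a * y * y)).
  pose proof (pow2_ge_0 (a * x + b)); pose proof (pow2_ge_0 (x * (a * x + b))); lra.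
Qed.

Lemma IZR_sq_ge1 k : k <> 0%Z -> 1 <= IZR k ^ 2.
Proof.
  intros Hk; replace (IZR k ^ 2) with (IZR (k * k)) by (rewrite mult_IZR; ring).
  apply IZR_le; nia.
Qed.

Lemma lnorm2_outside_gap x y w m n : 0 < y -> 0 < w ->
  outside_gap w (lattice_const x y / 2 * (1 + IZR m ^ 2)) (lnorm2 x y m n) /\
  outside_gap w (lattice_const x y / 2 * (1 + IZR n ^ 2)) (lnorm2 x y m n).
Proof.
  intros hy hw; pose proof (lnorm2_ge x y m n hy); pose proof (lattice_const_pos x y hy).
  unfold outside_gap.
  destruct (Z.eq_dec m 0) as [->|Hm]; destruct (Z.eq_dec n 0) as [->|Hn].
  - unfold lnorm2; simpl; split; left; nra.
  - pose proof (IZR_sq_ge1 n Hn); simpl in *; split; right; nra.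
  - pose proof (IZR_sq_ge1 m Hm); simpl in *; split; right; nra.
  - pose proof (IZR_sq_ge1 n Hn); pose proof (IZR_sq_ge1 m Hm); split; right; nra.
Qed.

Lemma lnorm2_convex_l x y m n :
  lnorm2 x y (m + 1) n - lnorm2 x y m n <= lnorm2 x y (m + 2) n - lnorm2 x y (m + 1) n.
Proof. unfold lnorm2; rewrite !plus_IZR; simpl; nra. Qed.

Lemma lnorm2_convex_r x y m n :
  lnorm2 x y m (n + 1) - lnorm2 x y m n <= lnorm2 x y m (n + 2) - lnorm2 x y m (n + 1).
Proof. unfold lnorm2; rewrite !plus_IZR; simpl; nra. Qed.

Lemma hterm_eq x y u v w p s m n :
  hterm x y u v w p s (m, n) =
  (expi (2 * PI * (IZR m * u + IZR n * v)) * trunc_pow w p s (lnorm2 x y m n))%C.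
Proof.
  unfold hterm, trunc_pow; simpl.
  destruct Rlt_dec; [destruct Rlt_dec|]; apply injective_projections; cbn; ring.
Qed.

Lemma hterm_row_l_bound x y u v w p s n N : 0 < y -> 0 < w -> 0 <= s ->
  Cmod (expi (2 * PI * u) - 1)%C
  * Cmod (Csum (zrange N) (fun m => hterm x y u v w p s (m, n)))
  <= 6 * gap_bound w s (lattice_const x y / 2 * (1 + IZR n ^ 2)).
Proof.
  intros hy hw hs; rewrite (Csum_ext _ _ _ (fun m => hterm_eq x y u v w p s m n)).
  apply (row_sum_bound N (fun m => lnorm2 x y m n) (fun m => IZR m * u + IZR n * v));
    auto; intro m.
  - rewrite plus_IZR; ring.
  - apply lnorm2_convex_l.
  - apply lnorm2_outside_gap; auto.
Qed.

Lemma hterm_row_r_bound x y u v w p s m N : 0 < y -> 0 < w -> 0 <= s ->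
  Cmod (expi (2 * PI * v) - 1)%C
  * Cmod (Csum (zrange N) (fun n => hterm x y u v w p s (m, n)))
  <= 6 * gap_bound w s (lattice_const x y / 2 * (1 + IZR m ^ 2)).
Proof.
  intros hy hw hs; rewrite (Csum_ext _ _ _ (fun n => hterm_eq x y u v w p s m n)).
  apply (row_sum_bound N (fun n => lnorm2 x y m n) (fun n => IZR m * u + IZR n * v));
    auto; intro n.
  - rewrite plus_IZR; ring.
  - apply lnorm2_convex_r.
  - apply lnorm2_outside_gap; auto.
Qed.

Section RowWeights.

Variables w mu : R.
Hypotheses (hw : 0 < w) (hmu : 0 < mu).

Definition row_weight (b : Z) : R := / Rmax w (mu * (1 + IZR b ^ 2)).

Definition crossover : R := sqrt w / sqrt mu.

(* A discrete analogue of [\int_n^oo dt / max(w, mu t^2)]; [mu t^2 = w] at the crossover. *)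
Definition tail_majorant (n : nat) : R :=
  if Rle_dec (INR n) crossover then (crossover - INR n) / w + 2 / (mu * crossover)
  else 2 / (mu * (INR n + 1)).

Lemma crossover_pos : 0 < crossover.
Proof. apply Rdiv_lt_0_compat; apply sqrt_lt_R0; assumption. Qed.

Lemma tail_majorant_ge0 n : 0 <= tail_majorant n.
Proof.
  pose proof crossover_pos; pose proof (pos_INR n).
  unfold tail_majorant; destruct Rle_dec.
  - assert (0 <= (crossover - INR n) / w) by (apply Rdiv_le_0_compat; lra).
    assert (0 < 2 / (mu * crossover)) by (apply Rdiv_lt_0_compat; nra); lra.
  - left; apply Rdiv_lt_0_compat; nra.
Qed.

Lemma row_weight_le_decrement n :
  row_weight (Z.of_nat (S n)) <= tail_majorant n - tail_majorant (S n).
Proof.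
  pose proof crossover_pos as Hk.
  assert (Hmk : mu * (crossover * crossover) = w).
  { unfold crossover; pose proof (sqrt_lt_R0 mu hmu).
    field_simplify; [rewrite !pow2_sqrt by lra; field|]; lra. }
  unfold row_weight, tail_majorant; rewrite <- INR_IZR_INZ, !S_INR.
  set (t := INR n + 1); assert (Ht : 1 <= t) by (unfold t; pose proof (pos_INR n); lra).
  assert (Hw : / Rmax w (mu * (1 + t ^ 2)) <= / w)
    by (apply Rinv_le_contravar; [lra | apply Rmax_l]).
  assert (Hmu : / Rmax w (mu * (1 + t ^ 2)) <= / (mu * (t * t))).
  { apply Rinv_le_contravar; [apply Rmult_lt_0_compat; nra|].
    eapply Rle_trans; [|apply Rmax_r]; apply Rmult_le_compat_l; nra. }
  assert (Hstep : / (mu * (t * t)) <= 2 / (mu * t) - 2 / (mu * (t + 1))).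
  { assert (E : 2 / (mu * t) - 2 / (mu * (t + 1)) - / (mu * (t * t))
                = (t - 1) / (mu * (t * t) * (t + 1))) by (field; lra).
    assert (0 <= (t - 1) / (mu * (t * t) * (t + 1)))
      by (apply Rdiv_le_0_compat; [|repeat apply Rmult_lt_0_compat]; lra).
    lra. }
  destruct (Rle_dec (INR n) crossover); destruct (Rle_dec t crossover);
    try (unfold t in *; lra).
  assert (2 / (mu * t) <= 2 / (mu * crossover))
    by (apply Rmult_le_compat_l; [lra | apply Rinv_le_contravar; nra]).
  assert (0 <= (crossover - INR n) / w) by (apply Rdiv_le_0_compat; lra).
  lra.
Qed.

Lemma row_weight_opp b : row_weight (- b) = row_weight b.
Proof. unfold row_weight; rewrite opp_IZR; do 3 f_equal; ring. Qed.

Lemma Rsum_row_weight_le N : Rsum (zrange N) row_weight <= 7 / (sqrt w * sqrt mu).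
Proof.
  assert (Htel : forall K, Rsum (zrange K) row_weight + 2 * tail_majorant K
                           <= row_weight 0 + 2 * tail_majorant 0).
  { induction K as [|K IH]; [unfold Rsum; simpl; lra|].
    rewrite zrange_S, app_comm_cons, Rsum_app; unfold Rsum in *; cbn [map fold_right].
    rewrite row_weight_opp; pose proof (row_weight_le_decrement K); lra. }
  specialize (Htel N); pose proof (tail_majorant_ge0 N).
  pose proof (sqrt_lt_R0 w hw) as Hsw; pose proof (sqrt_lt_R0 mu hmu) as Hsm.
  assert (Hw : w = sqrt w * sqrt w) by (rewrite sqrt_sqrt; lra).
  assert (Hm : mu = sqrt mu * sqrt mu) by (rewrite sqrt_sqrt; lra).
  assert (Htail0 : tail_majorant 0 = 3 / (sqrt w * sqrt mu)).
  { unfold tail_majorant; simpl; destruct Rle_dec; [|pose proof crossover_pos; lra].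
    unfold crossover; set (a := sqrt w) in *; set (b := sqrt mu) in *.
    rewrite Hw, Hm; field; lra. }
  assert (Hrw0 : row_weight 0 <= 1 / (sqrt w * sqrt mu)).
  { unfold row_weight, Rdiv; simpl; rewrite Rmult_1_l.
    replace (mu * (1 + 0 * (0 * 1))) with mu by ring.
    apply Rinv_le_contravar; [nra|].
    apply Rmax_case_strong; intro; nra. }
  lra.
Qed.

End RowWeights.

Lemma gap_bound_le w s K :
  0 < w -> 1 <= s -> gap_bound w s K <= Rpower w (1 - s) / Rmax w K.
Proof.
  intros hw hs; unfold gap_bound, Rdiv.
  pose proof (Rmax_l w K) as HK.
  replace s with (1 + (s - 1)) at 1 by ring.
  replace (1 - s) with (- (s - 1)) by ring.
  rewrite Rpower_plus, Rpower_1, Rpower_Ropp, <- Rinv_mult by lra.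
  apply Rinv_le_contravar; [apply Rmult_lt_0_compat; [apply exp_pos | lra]|].
  rewrite Rmult_comm; apply Rmult_le_compat_l; [lra | apply Rle_Rpower_l; lra].
Qed.

Lemma row_sums_bound d w s mu N (G : Z -> C) : 0 < d -> 0 < w -> 1 <= s -> 0 < mu ->
  (forall b, d * Cmod (G b) <= 6 * gap_bound w s (mu * (1 + IZR b ^ 2))) ->
  Cmod (Csum (zrange N) G) <= 42 / (d * sqrt mu) * Rpower w (1 / 2 - s).
Proof.
  intros hd hw hs hmu HG.
  set (c := 6 / d * Rpower w (1 - s)).
  assert (Hc : 0 <= c)
    by (apply Rmult_le_pos; [apply Rdiv_le_0_compat | apply Rlt_le, exp_pos]; lra).
  assert (Hrow : forall b, Cmod (G b) <= c * row_weight w mu b).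
  { intro b; specialize (HG b).
    pose proof (gap_bound_le w s (mu * (1 + IZR b ^ 2)) hw hs) as Hgap.
    change (Rpower w (1 - s) / Rmax w (mu * (1 + IZR b ^ 2)))
      with (Rpower w (1 - s) * row_weight w mu b) in Hgap.
    apply Rmult_le_reg_l with d; [lra|].
    replace (d * (c * row_weight w mu b)) with (6 * (Rpower w (1 - s) * row_weight w mu b))
      by (unfold c; field; lra).
    lra. }
  eapply Rle_trans; [apply Cmod_Csum_le|].
  eapply Rle_trans; [apply (Rsum_le _ _ _ Hrow)|]; rewrite Rsum_scal_l.
  eapply Rle_trans; [apply Rmult_le_compat_l, Rsum_row_weight_le; assumption|].
  assert (E : Rpower w (1 - s) = Rpower w (1 / 2 - s) * sqrt w).
  { rewrite <- Rpower_sqrt, <- Rpower_plus by lra; f_equal; field. }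
  pose proof (sqrt_lt_R0 w hw); pose proof (sqrt_lt_R0 mu hmu).
  unfold c; rewrite E; right; field; lra.
Qed.

Theorem mainTheorem9 (x y u v : R) (hy : 0 < y)
  (huv : ~ ((exists a : Z, u = IZR a) /\ (exists b : Z, v = IZR b))) :
  exists C0 : R, forall (w p s : R) (N : nat),
    0 < w -> w < p -> 1 <= s <= 2 ->
    (forall m n : Z, w < lnorm2 x y m n < p ->
       (Z.abs m <= Z.of_nat N)%Z /\ (Z.abs n <= Z.of_nat N)%Z) ->
    Cmod (h_box N x y u v w p s) <= C0 * Rpower w (1/2 - s).
Proof.
  set (mu := lattice_const x y / 2).
  assert (hmu : 0 < mu) by (pose proof (lattice_const_pos x y hy); unfold mu; lra).
  (* The estimate holds for every box and every s >= 1. *)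
  destruct (classic (exists b : Z, v = IZR b)) as [Hv | Hv].
  - assert (hd : 0 < Cmod (expi (2 * PI * u) - 1)%C)
      by (apply Cmod_sub_1_pos, expi_2PI_neq_1; tauto).
    exists (42 / (Cmod (expi (2 * PI * u) - 1)%C * sqrt mu)).
    intros w p s N hw _ hs _.
    unfold h_box; fold (Csum (list_prod (zrange N) (zrange N)) (hterm x y u v w p s)).
    rewrite Csum_list_prod, Csum_comm.
    apply row_sums_bound; try lra; intro n; apply hterm_row_l_bound; lra.
  - assert (hd : 0 < Cmod (expi (2 * PI * v) - 1)%C)
      by (apply Cmod_sub_1_pos, expi_2PI_neq_1; exact Hv).
    exists (42 / (Cmod (expi (2 * PI * v) - 1)%C * sqrt mu)).
    intros w p s N hw _ hs _.
    unfold h_box; fold (Csum (list_prod (zrange N) (zrange N)) (hterm x y u v w p s)).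
    rewrite Csum_list_prod.
    apply row_sums_bound; try lra; intro m; apply hterm_row_r_bound; lra.
Qed.
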